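(* Let $G$ and $G'$ be deterministic finite automata over the alphabet $\Sigma$, let $\Sigma_o\subseteq\Sigma$, and let $H:=T_{\Sigma_o}(G)$ and $H':=T_{\Sigma_o}(G')$. If $G'\sqsubseteq G$, then $H'\,\tilde{\sqsubseteq}\,H$.
   Context: A DFA $G=(Q,\Sigma,\delta_G,q_0,Q_m)$ has finite state set $Q$, alphabet $\Sigma$, partial transition function $\delta_G$ (extended to strings), initial state $q_0$, marked states $Q_m$; $L(G)$ is the set of strings $s$ with $\delta_G(q_0,s)$ defined. $P_{\Sigma_o}$ is the natural projection $\Sigma^*\to\Sigma_o^*$ erasing events outside $\Sigma_o$. The $\epsilon$-reach of $q$ is $\epsilon R_G(q)=\{\delta_G(q,s): s\in\Sigma^*, P_{\Sigma_o}(s)=\epsilon, \delta_G(q,s)\text{ defined}\}$. The observer $T_{\Sigma_o}(G)$ is the DFA over $\Sigma_o$ whose states are subsets of $Q$, with initial state $\epsilon R_G(q_0)$ and transition function $\delta_H(B,\sigma)=\bigcup_{q\in B,\ \delta_G(q,\sigma)\text{ defined}}\epsilon R_G(\delta_G(q,\sigma))$ (defined iff this union is nonempty), restricted to its states reachable from the initial state; a state $B$ is marked iff $B\subseteq Q_m$. $G'$ is a subautomaton of $G$, $G'\sqsubseteq G$, if $\delta_{G'}(q'_0,s)=\delta_G(q_0,s)$ for all $s\in L(G')$ (with $q'_0$ the initial state of $G'$). For automata whose states are sets, $H'$ is a subobserver of $H$, $H'\,\tilde{\sqsubseteq}\,H$, if $\delta_{H'}(h'_0,s)\subseteq\delta_H(h_0,s)$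 for all $s\in L(H')$, where $h_0,h'_0$ are the respective initial states. *)

From mathcomp Require Import all_boot.
From Stdlib Require Import ClassicalDescription.

Set Implicit Arguments.
Unset Strict Implicit.
Unset Printing Implicit Defensive.

Record dfa (Q Sigma : Type) := DFA {
  delta : Q -> Sigma -> option Q;
  init : Q;
  marked : Q -> Prop
}.

Fixpoint deltaS (Q Sigma : Type) (d : Q -> Sigma -> option Q) (q : Q)
  (s : seq Sigma) : option Q :=
  match s with
  | [::] => Some q
  | a :: s' => match d q a with
               | Some q' => deltaS d q' s'
               | None => None
               end
  end.

Definition lang (Q Sigma : Type) (G : dfa Q Sigma) (s : seq Sigma) : Prop :=
  deltaS (delta G) (init G) s <> None.

Definition proj (Sigma : Type) (So : pred Sigma) (s : seq Sigma) : seq Sigma :=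
  filter So s.

Definition eps_reach (Q Sigma : Type) (G : dfa Q Sigma) (So : pred Sigma)
  (q : Q) : Q -> Prop :=
  fun q' => exists s : seq Sigma,
      proj So s = [::] /\ deltaS (delta G) q s = Some q'.

(* observer transition: defined only on observable events, and only when
   the resulting union of epsilon-reaches is nonempty *)
Definition obs_step (Q Sigma : Type) (G : dfa Q Sigma) (So : pred Sigma)
  (B : Q -> Prop) (a : Sigma) : option (Q -> Prop) :=
  let B' := fun q' => exists q q1,
        B q /\ delta G q a = Some q1 /\ eps_reach G So q1 q' in
  if So a then
    if excluded_middle_informative (exists q', B' q') then Some B' else None
  else None.

Definition observer (Q Sigma : Type) (So : pred Sigma) (G : dfa Q Sigma)
  : dfa (Q -> Prop) Sigma :=
  {| delta := obs_step G So;
     init := eps_reach G So (init G);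
     marked := fun B => forall q, B q -> marked G q |}.

Definition subautomaton (Q Sigma : Type) (G' G : dfa Q Sigma) : Prop :=
  forall s, lang G' s ->
    deltaS (delta G') (init G') s = deltaS (delta G) (init G) s.

Definition subobserver (Q Sigma : Type) (H' H : dfa (Q -> Prop) Sigma) : Prop :=
  forall s, lang H' s ->
    exists B' B, deltaS (delta H') (init H') s = Some B' /\
                 deltaS (delta H) (init H) s = Some B /\
                 (forall q, B' q -> B q).

From mathcomp Require Import all_boot.
From Stdlib Require Import ClassicalDescription.

Set Implicit Arguments.
Unset Strict Implicit.
Unset Printing Implicit Defensive.

(* A subautomaton G' agrees with G on every run starting in a state that G'
   can reach (only runs from the initial state are constrained, so unreachable
   states of G' may behave arbitrarily). Hence the invariant "every state of the
   observer state of G' is G'-reachable and lies in the corresponding observer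
   state of G" holds initially and is preserved by observer transitions. *)

Lemma deltaS_cat (Q Sigma : Type) (d : Q -> Sigma -> option Q) q s1 s2 :
  deltaS d q (s1 ++ s2) = obind (deltaS d ^~ s2) (deltaS d q s1).
Proof. by elim: s1 q => [|a s1 IH] q //=; case: (d q a). Qed.

Lemma deltaS_simulation (X Y A : Type) (d : X -> A -> option X)
    (e : Y -> A -> option Y) (R : X -> Y -> Prop) :
  (forall x y a x', R x y -> d x a = Some x' -> exists2 y', e y a = Some y' & R x' y') ->
  forall s x y x', R x y -> deltaS d x s = Some x' ->
  exists2 y', deltaS e y s = Some y' & R x' y'.
Proof.
move=> step; elim=> [|a s IH] x y x' Rxy /=; first by move=> [<-]; exists y.
case dxa: (d x a) => [x1|] // dx1.
have [y1 eya Rxy1] := step _ _ _ _ Rxy dxa.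
by rewrite eya; exact: IH Rxy1 dx1.
Qed.

Section Subautomaton.

Variables (Q Sigma : Type) (So : pred Sigma) (G G' : dfa Q Sigma).

Definition reachable (A : dfa Q Sigma) (q : Q) : Prop :=
  exists s, deltaS (delta A) (init A) s = Some q.

Lemma reachable_deltaS (A : dfa Q Sigma) q s q' :
  reachable A q -> deltaS (delta A) q s = Some q' -> reachable A q'.
Proof. by move=> [t Ht] Hs; exists (t ++ s); rewrite deltaS_cat Ht. Qed.

Hypothesis subG : subautomaton G' G.

Lemma subautomaton_init : init G' = init G.
Proof.
have [] // : deltaS (delta G') (init G') [::] = deltaS (delta G) (init G) [::].
by rewrite subG.
Qed.

Lemma subautomaton_deltaS q s q' :
  reachable G' q -> deltaS (delta G') q s = Some q' -> deltaS (delta G) q s = Some q'.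
Proof.
move=> [t Ht] Hs.
have Hts : deltaS (delta G') (init G') (t ++ s) = Some q'
  by rewrite deltaS_cat Ht.
have Gt : deltaS (delta G) (init G) t = Some q.
  by rewrite -subG /lang Ht.
by rewrite -Hts subG /lang ?Hts // deltaS_cat Gt.
Qed.

Lemma subautomaton_delta q a q1 :
  reachable G' q -> delta G' q a = Some q1 -> delta G q a = Some q1.
Proof.
move=> Rq Hq; have := subautomaton_deltaS (s := [:: a]) (q' := q1) Rq.
by rewrite /= Hq; case: (delta G q a) => [?|] /(_ erefl).
Qed.

Lemma subautomaton_eps_reach q q' :
  reachable G' q -> eps_reach G' So q q' -> eps_reach G So q q' /\ reachable G' q'.
Proof.
move=> Rq [s [Ps Hs]]; split; last exact: reachable_deltaS Rq Hs.
by exists s; split; last exact: subautomaton_deltaS.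
Qed.

Definition reachable_sub (B' B : Q -> Prop) : Prop :=
  forall q, B' q -> B q /\ reachable G' q.

Lemma reachable_sub_init :
  reachable_sub (eps_reach G' So (init G')) (eps_reach G So (init G)).
Proof.
rewrite -subautomaton_init => q.
by apply: subautomaton_eps_reach; exists [::].
Qed.

Lemma obs_step_reachable_sub B' B a B'1 :
  reachable_sub B' B -> obs_step G' So B' a = Some B'1 ->
  exists2 B1, obs_step G So B a = Some B1 & reachable_sub B'1 B1.
Proof.
rewrite /obs_step => subB; case: (So a) => //.
case: excluded_middle_informative => // -[q0 Hq0] [<-].
set next' := fun q' => exists q q1, B' q /\ delta G' q a = Some q1 /\ eps_reach G' So q1 q'.
set next := fun q' => exists q q1, B q /\ delta G q a = Some q1 /\ eps_reach G So q1 q'.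
have sub_next : reachable_sub next' next.
  move=> q' [q [q1 [B'q [Hq1 Hq']]]].
  have [Bq Rq] := subB _ B'q.
  have Rq1 : reachable G' q1 by apply: (reachable_deltaS (s := [:: a]) Rq); rewrite /= Hq1.
  have [Gq' Rq'] := subautomaton_eps_reach Rq1 Hq'.
  split=> //; exists q, q1; split=> //; split=> //.
  exact: subautomaton_delta Hq1.
case: excluded_middle_informative => [?|no_next]; first by exists next.
by case: no_next; exists q0; case: (sub_next _ Hq0).
Qed.

End Subautomaton.

Theorem theorem1 (Q Sigma : finType) (So : pred Sigma) (G G' : dfa Q Sigma) :
  subautomaton G' G -> subobserver (observer So G') (observer So G).
Proof.
move=> subG s; rewrite /lang; case E: deltaS => [B'|] // _.
have [B EB subB] := deltaS_simulation (obs_step_reachable_sub subG)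
  (reachable_sub_init (So := So) subG) E.
by exists B', B; do 2!split=> //; move=> q /subB [].
Qed.
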